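(* If $f(z)=z+\sum_{n=2}^\infty a_nz^n\in\mathcal{S}^*_{nc}$, then $$\sum_{n=2}^\infty (n^2k_1-4)|a_n|^2\le 4-k_1,\qquad\text{where } k_1=\cos^2 1.$$
   Context: $\mathbb{D}$ is the open unit disk. $\mathcal{A}$ is the class of analytic $f$ on $\mathbb{D}$ with $f(0)=0$, $f'(0)=1$. For analytic $f,g$ on $\mathbb{D}$, $f\prec g$ means $f=g\circ\omega$ for some analytic $\omega:\mathbb{D}\to\mathbb{D}$ with $\omega(0)=0$. $\mathcal{S}^*_{nc}=\{f\in\mathcal{A}: zf'(z)/f(z)\prec (1+z)/\cos z\}$. *)

From Stdlib Require Import Reals.
From Coquelicot Require Import Coquelicot.
Open Scope R_scope.

Definition inD (z : C) : Prop := Cmod z < 1.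

Definition holo_on_D (f : C -> C) : Prop :=
  forall z : C, inD z -> ex_derive f z.

Definition classA (f : C -> C) : Prop :=
  holo_on_D f /\ f 0%C = 0%C /\ C_derive f 0%C = 1%C.

Definition subordinate (f g : C -> C) : Prop :=
  holo_on_D f /\ holo_on_D g /\
  exists w : C -> C, holo_on_D w /\ w 0%C = 0%C /\
    (forall z, inD z -> inD (w z)) /\
    (forall z, inD z -> f z = g (w z)).

(* complex cosine: cos(x+iy) = cos x cosh y - i sin x sinh y *)
Definition Ccos (z : C) : C :=
  (cos (Re z) * cosh (Im z), - (sin (Re z) * sinh (Im z))).

Definition starQ (f : C -> C) (z : C) : C :=
  if Req_EM_T (Cmod z) 0 then 1%C else (z * C_derive f z / f z)%C.

Definition nc_fun (z : C) : C := ((1 + z) / Ccos z)%C.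

(* S*_nc; membership presupposes f(z) <> 0 for z <> 0 so that z f'/f is defined *)
Definition S_star_nc (f : C -> C) : Prop :=
  classA f /\ (forall z, inD z -> z <> 0%C -> f z <> 0%C) /\
  subordinate (starQ f) nc_fun.

From Stdlib Require Import Reals Lra Lia.
From Coquelicot Require Import Coquelicot.
Open Scope R_scope.

(* Since z f'/f is subordinate to (1 + z)/cos z, and |cos (x + iy)| >= cos x cosh y >= cos 1
   for |x| < 1, every f in S*_nc satisfies |z f'(z)| <= M |f(z)| on the disk with M = 2/cos 1.
   On the circle |z| = r, Parseval's identity turns this into
   sum n^2 |a_n|^2 r^(2n) <= M^2 sum |a_n|^2 r^(2n).  We apply Parseval in its discrete form,
   at the (P+1)-th roots of unity, to the truncated Taylor series, whose tails decay
   geometrically.  As cos 1 >= 1/2 gives M <= 4, the terms with n >= 4 are nonnegative, so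
   letting P -> oo and then r -> 1 yields sum_(n <= P) (n^2 - M^2) |a_n|^2 <= 0 for P >= 3;
   multiplying by cos^2 1 and isolating a_0 = 0 and a_1 = 1 gives the claim. *)

(* Coquelicot states sums and series over structure carriers that hide C and R from ring. *)
Ltac ring_C :=
  unfold minus; change plus with Cplus; change opp with Copp; change scal with Cmult;
  match goal with |- ?a = ?b => change (@eq C a b) end; ring.

Ltac eq_R := match goal with |- ?a = ?b => change (@eq R a b) end.

Ltac ring_R := change plus with Rplus; eq_R; ring.

Lemma pow_le_1 (r : R) (k : nat) : 0 <= r <= 1 -> r ^ k <= 1.
Proof.
  intros Hr; induction k as [|k IH]; simpl; [lra|].
  pose proof (pow_le r k (proj1 Hr)); nra.
Qed.

Lemma one_minus_pow_le (r : R) (k : nat) : 0 <= r <= 1 -> 1 - r ^ k <= INR k * (1 - r).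
Proof.
  intros Hr; induction k as [|k IH]; [simpl; lra|].
  rewrite S_INR; simpl.
  pose proof (pow_le r k (proj1 Hr)); pose proof (pow_le_1 r k Hr); nra.
Qed.

(* With e = (1 - q) / 3, Bernoulli gives n + 1 <= (1 + e)^n / e, and (1 + e)^2 q < 1. *)
Lemma sq_mul_geom_le_geom (q : R) : 0 <= q < 1 ->
  exists K t, 0 <= t < 1 /\ forall n, (INR n + 1) ^ 2 * q ^ n <= K * t ^ n.
Proof.
  intros Hq.
  set (e := (1 - q) / 3).
  assert (He : 0 < e <= 1 / 3) by (unfold e; lra).
  exists (/ e ^ 2), ((1 + e) ^ 2 * q); split; [split|].
  - apply Rmult_le_pos; [apply pow2_ge_0 | lra].
  - assert (q = 1 - 3 * e) by (unfold e; lra); nra.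
  - intros n.
    assert (Hlin : INR n + 1 <= (1 + e) ^ n / e).
    { pose proof (Rle_pow_lin e n (Rlt_le _ _ (proj1 He))).
      apply Rmult_le_reg_r with e; [lra|].
      unfold Rdiv; rewrite Rmult_assoc, Rinv_l by lra.
      pose proof (pos_INR n); nra. }
    replace (/ e ^ 2 * ((1 + e) ^ 2 * q) ^ n) with (((1 + e) ^ n / e) ^ 2 * q ^ n)
      by (rewrite Rpow_mult_distr, <- pow_mult, Nat.mul_comm, pow_mult; field; lra).
    apply Rmult_le_compat_r; [apply pow_le; lra|].
    pose proof (pos_INR n); apply pow_incr; lra.
Qed.

Lemma le_of_sq_succ_mul_le (n : nat) (x y : R) :
  0 <= x -> (INR n + 1) ^ 2 * x <= y -> x <= y /\ INR n * x <= y.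
Proof. intros Hx Hxy; pose proof (pos_INR n); split; nra. Qed.

Lemma le_0_of_le_geom (x K t : R) (N : nat) :
  0 <= t < 1 -> (forall n, (N <= n)%nat -> x <= K * t ^ n) -> x <= 0.
Proof.
  intros Ht Hx.
  assert (Hgeom : is_lim_seq (fun n => t ^ n) 0) by (apply is_lim_seq_geom; rewrite Rabs_pos_eq; lra).
  pose proof (is_lim_seq_scal_l _ K 0 Hgeom) as Hlim; simpl in Hlim; rewrite Rmult_0_r in Hlim.
  apply (is_lim_seq_le_loc (fun _ => x) (fun n => K * t ^ n) x 0);
    [exists N; exact Hx | apply is_lim_seq_const | exact Hlim].
Qed.

Lemma le_0_of_le_mul_one_minus (x L : R) :
  (forall r, 0 < r < 1 -> x <= L * (1 - r)) -> x <= 0.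
Proof.
  intros Hx; apply Rle_plus_epsilon; intros eps Heps.
  set (L' := Rabs L + 1).
  assert (HL' : 0 < L') by (unfold L'; pose proof (Rabs_pos L); lra).
  set (r := Rmax (1 / 2) (1 - eps / L')).
  assert (Hr : 0 < r < 1).
  { split; [pose proof (Rmax_l (1 / 2) (1 - eps / L')); unfold r in *; lra|].
    apply Rmax_lub_lt; [lra|]; pose proof (Rdiv_lt_0_compat eps L' Heps HL'); lra. }
  assert (H1r : 1 - r <= eps / L') by (pose proof (Rmax_r (1 / 2) (1 - eps / L')); unfold r in *; lra).
  specialize (Hx r Hr).
  assert (L * (1 - r) <= L' * (1 - r)) by (apply Rmult_le_compat_r; [lra | pose proof (Rle_abs L); unfold L'; lra]).
  assert (L' * (1 - r) <= eps).
  { apply Rmult_le_compat_l with (r := L') in H1r; [|lra].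
    replace (L' * (eps / L')) with eps in H1r by (field; lra); exact H1r. }
  lra.
Qed.

Lemma sum_n_le_loc (x y : nat -> R) (N : nat) :
  (forall k, (k <= N)%nat -> x k <= y k) -> sum_n x N <= sum_n y N.
Proof.
  intros Hxy; induction N as [|N IH].
  - rewrite !sum_O; apply Hxy; lia.
  - rewrite !sum_Sn; apply Rplus_le_compat; [apply IH; intros; apply Hxy; lia | apply Hxy; lia].
Qed.

Lemma sum_n_le_mono (x : nat -> R) (N M : nat) :
  (forall n, (N < n)%nat -> 0 <= x n) -> (N <= M)%nat -> sum_n x N <= sum_n x M.
Proof.
  intros Hx HNM; induction HNM as [|M HNM IH]; [lra|].
  rewrite sum_Sn; change plus with Rplus; pose proof (Hx (S M) ltac:(lia)); lra.
Qed.

Lemma sum_n_Rmult_l (a : R) (x : nat -> R) (N : nat) :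
  sum_n (fun n => a * x n) N = a * sum_n x N.
Proof. exact (sum_n_mult_l a x N). Qed.

Lemma sum_n_Rplus (x y : nat -> R) (N : nat) :
  sum_n (fun n => x n + y n) N = sum_n x N + sum_n y N.
Proof. exact (sum_n_plus x y N). Qed.

Lemma sum_n_shift_2 (x : nat -> R) (N : nat) :
  sum_n (fun n => x (n + 2)%nat) N = sum_n x (N + 2) - x 0%nat - x 1%nat.
Proof.
  induction N as [|N IH].
  - rewrite sum_O; simpl; rewrite !sum_Sn, sum_O; simpl; ring_R.
  - rewrite sum_Sn, IH; replace (S N + 2)%nat with (S (N + 2)) by lia.
    rewrite (sum_Sn x (N + 2)); simpl; ring_R.
Qed.

Lemma le_0_of_radial_le_0 (x : nat -> R) (P : nat) :
  (forall r, 0 < r < 1 -> sum_n (fun n => x n * r ^ (2 * n)) P <= 0) -> sum_n x P <= 0.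
Proof.
  intros Hx.
  apply (le_0_of_le_mul_one_minus _ (sum_n (fun n => Rabs (x n) * INR (2 * n)) P)).
  intros r Hr.
  apply Rle_trans with (sum_n (fun n => x n * r ^ (2 * n) + (1 - r) * (Rabs (x n) * INR (2 * n))) P).
  - apply sum_n_le_loc; intros n _.
    pose proof (pow_le r (2 * n) ltac:(lra)); pose proof (pow_le_1 r (2 * n) ltac:(lra)).
    pose proof (one_minus_pow_le r (2 * n) ltac:(lra)).
    pose proof (Rle_abs (x n)); pose proof (Rabs_pos (x n)).
    assert (x n * (1 - r ^ (2 * n)) <= Rabs (x n) * (1 - r ^ (2 * n))) by (apply Rmult_le_compat_r; lra).
    assert (Rabs (x n) * (1 - r ^ (2 * n)) <= Rabs (x n) * (INR (2 * n) * (1 - r))) by (apply Rmult_le_compat_l; lra).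
    nra.
  - rewrite sum_n_Rplus, sum_n_Rmult_l; specialize (Hx r Hr); lra.
Qed.

Lemma Cmod_sum_n_le (e : nat -> C) (N : nat) :
  Cmod (sum_n e N) <= sum_n (fun n => Cmod (e n)) N.
Proof. exact (norm_sum_n_m e 0 N). Qed.

Lemma sum_n_Cmult_l (a : C) (u : nat -> C) (N : nat) :
  sum_n (fun n => a * u n)%C N = (a * sum_n u N)%C.
Proof. exact (sum_n_mult_l a u N). Qed.

Lemma sum_n_Cmult_r (a : C) (u : nat -> C) (N : nat) :
  sum_n (fun n => u n * a)%C N = (sum_n u N * a)%C.
Proof. exact (sum_n_mult_r a u N). Qed.

Lemma sum_n_Cconj (u : nat -> C) (N : nat) :
  Cconj (sum_n u N) = sum_n (fun n => Cconj (u n)) N.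
Proof.
  induction N as [|N IH]; rewrite ?sum_O, ?sum_Sn; [reflexivity|].
  rewrite <- IH; apply Cplus_conj.
Qed.

Lemma sum_n_RtoC (x : nat -> R) (N : nat) :
  sum_n (fun n => RtoC (x n)) N = RtoC (sum_n x N).
Proof.
  induction N as [|N IH]; rewrite ?sum_O, ?sum_Sn; [reflexivity|].
  rewrite IH; symmetry; apply RtoC_plus.
Qed.

Lemma sum_n_Cgeom (z : C) (N : nat) :
  ((1 - z) * sum_n (fun k => z ^ k) N = 1 - z ^ S N)%C.
Proof.
  induction N as [|N IH]; rewrite ?sum_O, ?sum_Sn; [simpl; ring|].
  change plus with Cplus; rewrite Cmult_plus_distr_l, IH; simpl; ring.
Qed.

Lemma sum_n_kronecker (x : C) (n N : nat) : (n <= N)%nat ->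
  sum_n (fun m => if Nat.eq_dec n m then x else RtoC 0) N = x.
Proof.
  intros HnN.
  assert (Hlow : forall M, (M < n)%nat -> sum_n (fun m => if Nat.eq_dec n m then x else RtoC 0) M = RtoC 0).
  { induction M as [|M IH]; intros HM; rewrite ?sum_O, ?sum_Sn;
      destruct Nat.eq_dec; try lia; [reflexivity|].
    rewrite IH by lia; ring_C. }
  induction HnN as [|N HnN IH].
  - destruct n as [|n]; [rewrite sum_O; destruct Nat.eq_dec; [reflexivity | lia]|].
    rewrite sum_Sn, Hlow by lia; destruct Nat.eq_dec; [ring_C | lia].
  - rewrite sum_Sn, IH; destruct Nat.eq_dec; [lia | ring_C].
Qed.

Lemma Cmod_series_le (e : nat -> C) (b : nat -> R) (L : C) (S : R) :
  is_series e L -> is_series b S -> (forall n, Cmod (e n) <= b n) -> Cmod L <= S.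
Proof.
  intros He Hb Heb.
  apply (is_lim_seq_le (fun n => Cmod (sum_n e n)) (sum_n b) (Cmod L) S); [| | exact Hb].
  - intros n; eapply Rle_trans; [apply Cmod_sum_n_le | apply sum_n_m_le, Heb].
  - exact (filterlim_comp _ _ _ (sum_n e) norm eventually (locally L) _ He (filterlim_norm L)).
Qed.

Lemma is_series_terms_bounded (e : nat -> C) (L : C) :
  is_series e L -> exists B, forall n, Cmod (e n) <= B.
Proof.
  intros He.
  destruct (filterlim_bounded (sum_n e) (ex_intro _ L He)) as [B HB].
  exists (2 * B); intros [|n].
  - pose proof (HB 0%nat) as H0; rewrite sum_O in H0.
    pose proof (Cmod_ge_0 (e 0%nat)); change norm with Cmod in H0; lra.
  - replace (e (S n)) with (sum_n e (S n) - sum_n e n)%C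
      by (rewrite sum_Sn; change plus with Cplus; ring).
    pose proof (HB (S n)); pose proof (HB n); change norm with Cmod in *.
    eapply Rle_trans; [apply Cmod_triangle | rewrite Cmod_opp; lra].
Qed.

Lemma is_series_of_eventually_nonneg_bounded (u : nat -> R) (N : nat) (B : R) :
  (forall n, (N <= n)%nat -> 0 <= u n) -> (forall n, (N <= n)%nat -> sum_n u n <= B) ->
  exists s, is_series u s /\ s <= B.
Proof.
  intros Hu HB.
  set (S' n := sum_n u (n + N)).
  assert (Hincr : forall n, S' n <= S' (S n)).
  { intros n; unfold S'; rewrite Nat.add_succ_l, sum_Sn; change plus with Rplus.
    pose proof (Hu (S (n + N)) ltac:(lia)); lra. }
  destruct (ex_finite_lim_seq_incr S' B Hincr (fun n => HB (n + N)%nat ltac:(lia))) as [s Hs].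
  exists s; split.
  - exact (proj2 (is_lim_seq_incr_n (sum_n u) N s) Hs).
  - exact (is_lim_seq_le S' (fun _ => B) s B (fun n => HB (n + N)%nat ltac:(lia)) Hs (is_lim_seq_const B)).
Qed.

Section GeometricDomination.

Variables (e : nat -> C) (Q t : R).
Hypothesis Ht : 0 <= t < 1.
Hypothesis He : forall n, Cmod (e n) <= Q * t ^ n.

Lemma Cmod_sum_n_le_geom (N : nat) : Cmod (sum_n e N) <= Q / (1 - t).
Proof.
  assert (HQ : 0 <= Q) by (pose proof (He 0%nat); pose proof (Cmod_ge_0 (e 0%nat)); simpl in *; lra).
  eapply Rle_trans; [apply Cmod_sum_n_le|].
  eapply Rle_trans; [apply sum_n_m_le, He|].
  change (sum_n_m ?x 0 N) with (sum_n x N).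
  rewrite sum_n_Rmult_l, sum_n_Reals, tech3 by lra.
  pose proof (pow_le t (S N) (proj1 Ht)).
  unfold Rdiv; apply Rmult_le_compat_l; [exact HQ|].
  rewrite <- (Rmult_1_l (/ (1 - t))) at 2.
  apply Rmult_le_compat_r; [left; apply Rinv_0_lt_compat|]; lra.
Qed.

Lemma Cmod_series_tail_le_geom (L : C) (N : nat) :
  is_series e L -> Cmod (L - sum_n e N)%C <= Q * t ^ S N / (1 - t).
Proof.
  intros HL.
  apply (Cmod_series_le (fun k => e (S N + k)%nat) (fun k => Q * t ^ S N * t ^ k)).
  - apply is_series_incr_n; [lia|].
    match goal with |- is_series _ ?l => replace l with L; [exact HL|] end.
    change (L = L - sum_n e N + sum_n e N)%C; ring.
  - apply (is_series_scal_l (V := R_NormedModule) (Q * t ^ S N) _ (/ (1 - t))).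
    apply is_series_geom; rewrite Rabs_pos_eq; lra.
  - intros k; rewrite Rmult_assoc, <- pow_add; apply He.
Qed.

End GeometricDomination.

(** * Termwise differentiation of power series *)

Definition pow_remainder (y z : C) (m : nat) : C :=
  (y ^ S m - z ^ S m - INR (S m) * z ^ m * (y - z))%C.

Lemma pow_remainder_S (y z : C) (m : nat) :
  pow_remainder y z (S m) = (y * pow_remainder y z m + INR (S m) * z ^ m * (y - z) ^ 2)%C.
Proof.
  unfold pow_remainder; rewrite (S_INR (S m)), RtoC_plus; simpl; ring.
Qed.

Lemma Cmod_pow_remainder_le (y z : C) (r : R) (m : nat) :
  Cmod y <= r -> Cmod z <= r ->
  r * Cmod (pow_remainder y z m) <= INR (S m) ^ 2 * r ^ m * Cmod (y - z) ^ 2.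
Proof.
  intros Hy Hz.
  assert (Hr : 0 <= r) by (pose proof (Cmod_ge_0 y); lra).
  set (d := Cmod (y - z)).
  induction m as [|m IH].
  - unfold pow_remainder; simpl.
    replace (y * 1 - z * 1 - 1 * 1 * (y - z))%C with (RtoC 0) by ring.
    rewrite Cmod_0; pose proof (pow2_ge_0 d); nra.
  - assert (Hstep : Cmod (pow_remainder y z (S m))
                    <= r * Cmod (pow_remainder y z m) + INR (S m) * r ^ m * d ^ 2).
    { rewrite pow_remainder_S.
      eapply Rle_trans; [apply Cmod_triangle|].
      rewrite !Cmod_mult, !Cmod_pow, Cmod_R, Rabs_pos_eq by apply pos_INR.
      apply Rplus_le_compat.
      - apply Rmult_le_compat_r; [apply Cmod_ge_0 | exact Hy].
      - apply Rmult_le_compat_r; [apply pow2_ge_0|].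
        apply Rmult_le_compat_l; [apply pos_INR|].
        apply pow_incr; split; [apply Cmod_ge_0 | exact Hz]. }
    set (n := INR (S m)) in *; set (E := Cmod (pow_remainder y z m)) in *.
    assert (Hn : 0 <= n) by apply pos_INR.
    assert (Hrmd : 0 <= r ^ m * d ^ 2) by (apply Rmult_le_pos; [apply pow_le | apply pow2_ge_0]; lra).
    apply Rle_trans with (r * (r * E) + n * (r * (r ^ m * d ^ 2))).
    { apply Rmult_le_compat_l with (r := r) in Hstep; [nra | exact Hr]. }
    apply Rmult_le_compat_l with (r := r) in IH; [|exact Hr].
    assert (HrX : 0 <= (n + 1) * (r * (r ^ m * d ^ 2))) by (apply Rmult_le_pos; [|apply Rmult_le_pos]; lra).
    rewrite (S_INR (S m)); fold n; simpl pow.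
    replace ((n + 1) ^ 2 * (r * r ^ m) * d ^ 2)
      with (r * (n ^ 2 * r ^ m * d ^ 2) + n * (r * (r ^ m * d ^ 2)) + (n + 1) * (r * (r ^ m * d ^ 2)))
      by ring.
    lra.
Qed.

Lemma is_derive_of_quadratic_remainder (f : C -> C) (z D : C) (L delta : R) :
  0 < delta ->
  (forall y, Cmod (y - z) < delta -> Cmod (f y - f z - (y - z) * D) <= L * Cmod (y - z) ^ 2) ->
  is_derive f z D.
Proof.
  intros Hdelta Hrem; split; [apply is_linear_scal_l|].
  intros x Hx eps.
  apply (is_filter_lim_locally_unique (K := C_AbsRing) (V := AbsRing_NormedModule C_AbsRing)) in Hx;
    subst x.
  apply (locally_le_locally_norm (K := C_AbsRing) (V := AbsRing_NormedModule C_AbsRing) z).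
  set (L' := Rabs L + 1).
  assert (HL' : 0 < L') by (unfold L'; pose proof (Rabs_pos L); lra).
  assert (Hmin : 0 < Rmin delta (eps / L'))
    by (apply Rmin_pos; [lra | apply Rdiv_lt_0_compat; [apply cond_pos | lra]]).
  exists (mkposreal _ Hmin); intros y Hy; unfold ball_norm in Hy; simpl in Hy.
  change (norm (minus y z)) with (Cmod (y - z)) in Hy |- *.
  change (norm (minus (minus (f y) (f z)) (scal (minus y z) D)))
    with (Cmod (f y - f z - (y - z) * D)).
  pose proof (Rmin_l delta (eps / L')); pose proof (Rmin_r delta (eps / L')).
  set (d := Cmod (y - z)) in *.
  assert (Hd : 0 <= d) by apply Cmod_ge_0.
  assert (HLd : L' * d <= eps).
  { apply Rmult_le_reg_r with (/ L'); [apply Rinv_0_lt_compat; lra|].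
    replace (L' * d * / L') with d by (field; lra).
    unfold Rdiv in *; lra. }
  eapply Rle_trans; [apply Hrem; change (d < delta); lra|].
  assert (L <= L') by (pose proof (Rle_abs L); unfold L'; lra).
  assert (L * d <= L' * d) by (apply Rmult_le_compat_r; lra).
  change (L * d ^ 2 <= eps * d); simpl; rewrite Rmult_1_r, <- Rmult_assoc; apply Rmult_le_compat_r; lra.
Qed.

Definition PS_derive_C (c : nat -> C) (n : nat) : C := (INR (S n) * c (S n))%C.

Section PowerSeriesDerivative.

Variables (c : nat -> C) (f : C -> C) (r K t : R).
Hypothesis Hr : 0 < r.
Hypothesis Ht : 0 <= t < 1.
Hypothesis Hc : forall n, (INR n + 1) ^ 2 * (Cmod (c n) * r ^ n) <= K * t ^ n.
Hypothesis Hf : forall z, Cmod z < r -> is_series (fun n => c n * z ^ n)%C (f z).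

Let coef_weight_succ_le (m : nat) : INR (S m) ^ 2 * (Cmod (c (S m)) * r ^ S m) <= K * t ^ m.
Proof.
  pose proof (Hc (S m)) as H; pose proof (pos_INR (S m)).
  assert (0 <= Cmod (c (S m)) * r ^ S m) by (apply Rmult_le_pos; [apply Cmod_ge_0 | apply pow_le; lra]).
  assert (K * t ^ S m <= K * t ^ m).
  { assert (0 <= K) by (pose proof (Hc 0%nat); pose proof (Cmod_ge_0 (c 0%nat)); simpl in *; nra).
    apply Rmult_le_compat_l; [assumption|].
    simpl; pose proof (pow_le t m (proj1 Ht)); nra. }
  nra.
Qed.

Lemma Cmod_PS_derive_C_le (z : C) (m : nat) :
  Cmod z <= r -> Cmod (PS_derive_C c m * z ^ m) <= K / r * t ^ m.
Proof.
  intros Hz; unfold PS_derive_C.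
  rewrite !Cmod_mult, Cmod_pow, Cmod_R, Rabs_pos_eq by apply pos_INR.
  pose proof (coef_weight_succ_le m); pose proof (pos_INR (S m)).
  assert (1 <= INR (S m)) by (rewrite S_INR; pose proof (pos_INR m); lra).
  assert (Hzr : Cmod z ^ m <= r ^ m) by (apply pow_incr; split; [apply Cmod_ge_0 | exact Hz]).
  assert (0 <= Cmod (c (S m)) * r ^ m) by (apply Rmult_le_pos; [apply Cmod_ge_0 | apply pow_le; lra]).
  apply Rmult_le_reg_l with r; [exact Hr|].
  replace (r * (K / r * t ^ m)) with (K * t ^ m) by (field; lra).
  apply Rle_trans with (INR (S m) * (Cmod (c (S m)) * r ^ S m)).
  - simpl pow; rewrite Rmult_assoc.
    replace (INR (S m) * (Cmod (c (S m)) * (r * r ^ m))) with (r * (INR (S m) * (Cmod (c (S m)) * r ^ m))) by ring.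
    apply Rmult_le_compat_l; [lra|].
    apply Rmult_le_compat_l; [lra|].
    apply Rmult_le_compat_l; [apply Cmod_ge_0 | exact Hzr].
  - eapply Rle_trans; [|eassumption].
    apply Rmult_le_compat_r; [apply Rmult_le_pos; [apply Cmod_ge_0 | apply pow_le; lra]|].
    set (n := INR (S m)) in *; replace (n ^ 2) with (n * n) by ring; nra.
Qed.

Lemma ex_series_PS_derive_C (z : C) :
  Cmod z <= r -> ex_series (fun m => PS_derive_C c m * z ^ m)%C.
Proof.
  intros Hz.
  apply (ex_series_le (V := C_CompleteNormedModule) _ (fun m => K / r * t ^ m));
    [intros m; apply Cmod_PS_derive_C_le, Hz|].
  apply (ex_series_scal_l (V := R_NormedModule)), ex_series_geom.
  rewrite Rabs_pos_eq; lra.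
Qed.

Lemma Cmod_power_series_remainder_le (y z D : C) :
  Cmod y < r -> Cmod z < r -> is_series (fun m => PS_derive_C c m * z ^ m)%C D ->
  Cmod (f y - f z - (y - z) * D) <= K / (r ^ 2 * (1 - t)) * Cmod (y - z) ^ 2.
Proof.
  intros Hy Hz HD.
  set (d := Cmod (y - z)).
  assert (Hdiff : is_series (fun m => c (S m) * (y ^ S m - z ^ S m))%C (f y - f z)%C).
  { apply (is_series_incr_1 (fun m => c m * (y ^ m - z ^ m))%C).
    match goal with |- is_series _ ?l => replace l with (f y - f z)%C end.
    - eapply is_series_ext; [|exact (is_series_minus _ _ _ _ (Hf y Hy) (Hf z Hz))].
      intros n; simpl; ring_C.
    - simpl; ring_C. }
  assert (Hrem : is_series (fun m => c (S m) * pow_remainder y z m)%C (f y - f z - (y - z) * D)%C).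
  { eapply is_series_ext;
      [|exact (is_series_minus _ _ _ _ Hdiff (is_series_scal_l (y - z)%C _ _ HD))].
    intros n; unfold pow_remainder, PS_derive_C; ring_C. }
  apply (Cmod_series_le _ (fun m => K * d ^ 2 / r ^ 2 * t ^ m) _ _ Hrem).
  - replace (K / (r ^ 2 * (1 - t)) * d ^ 2) with (K * d ^ 2 / r ^ 2 * / (1 - t))
      by (field; split; nra).
    apply (is_series_scal_l (V := R_NormedModule) _ _ (/ (1 - t))), is_series_geom.
    rewrite Rabs_pos_eq; lra.
  - intros m; rewrite Cmod_mult.
    pose proof (Cmod_pow_remainder_le y z r m ltac:(lra) ltac:(lra)) as HR; fold d in HR.
    pose proof (coef_weight_succ_le m).
    apply Rmult_le_reg_l with (r ^ 2); [nra|].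
    replace (r ^ 2 * (K * d ^ 2 / r ^ 2 * t ^ m)) with (K * t ^ m * d ^ 2) by (field; lra).
    apply Rle_trans with (Cmod (c (S m)) * r * (INR (S m) ^ 2 * r ^ m * d ^ 2)).
    + replace (r ^ 2 * (Cmod (c (S m)) * Cmod (pow_remainder y z m)))
        with (Cmod (c (S m)) * r * (r * Cmod (pow_remainder y z m))) by ring.
      apply Rmult_le_compat_l; [apply Rmult_le_pos; [apply Cmod_ge_0 | lra] | exact HR].
    + replace (Cmod (c (S m)) * r * (INR (S m) ^ 2 * r ^ m * d ^ 2))
        with (INR (S m) ^ 2 * (Cmod (c (S m)) * r ^ S m) * d ^ 2) by (simpl; ring).
      apply Rmult_le_compat_r; [apply pow2_ge_0 | assumption].
Qed.

Lemma is_derive_power_series (z D : C) :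
  Cmod z < r -> is_series (fun m => PS_derive_C c m * z ^ m)%C D -> is_derive f z D.
Proof.
  intros Hz HD.
  apply (is_derive_of_quadratic_remainder f z D (K / (r ^ 2 * (1 - t))) (r - Cmod z)); [lra|].
  intros y Hy; apply Cmod_power_series_remainder_le; [|exact Hz|exact HD].
  replace y with (z + (y - z))%C by ring.
  eapply Rle_lt_trans; [apply Cmod_triangle | lra].
Qed.

Lemma is_series_mul_C_derive (z : C) :
  Cmod z < r -> is_series (fun n => INR n * c n * z ^ n)%C (z * C_derive f z)%C.
Proof.
  intros Hz.
  destruct (ex_series_PS_derive_C z (Rlt_le _ _ Hz)) as [D HD].
  rewrite (is_C_derive_unique f z D (is_derive_power_series z D Hz HD)).
  apply is_series_decr_1.
  match goal with |- is_series _ ?l => replace l with (z * D)%C end.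
  - eapply is_series_ext; [|exact (is_series_scal_l z _ _ HD)].
    intros n; unfold PS_derive_C; simpl; ring_C.
  - simpl; ring_C.
Qed.

End PowerSeriesDerivative.

Section UnitDiskPowerSeries.

Variables (c : nat -> C) (f : C -> C).
Hypothesis Hf : forall z, Cmod z < 1 -> is_series (fun n => c n * z ^ n)%C (f z).

Lemma coef_weight_le_geom (r : R) : 0 <= r < 1 ->
  exists K t, 0 <= t < 1 /\ forall n, (INR n + 1) ^ 2 * (Cmod (c n) * r ^ n) <= K * t ^ n.
Proof.
  intros Hr.
  set (rho := (1 + r) / 2); set (q := r / rho).
  assert (Hrho : Cmod (RtoC rho) < 1) by (rewrite Cmod_R, Rabs_pos_eq; unfold rho; lra).
  assert (Hq : 0 <= q < 1).
  { unfold q; split; [apply Rmult_le_pos; [|left; apply Rinv_0_lt_compat]; unfold rho; lra|].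
    apply Rmult_lt_reg_r with rho; [unfold rho; lra|].
    unfold Rdiv; rewrite Rmult_assoc, Rinv_l; unfold rho; lra. }
  destruct (is_series_terms_bounded _ _ (Hf _ Hrho)) as [B HB].
  destruct (sq_mul_geom_le_geom q Hq) as [K [t [Ht Hgeom]]].
  exists (K * B), t; split; [exact Ht|]; intros n.
  assert (Hcn : Cmod (c n) * rho ^ n <= B).
  { specialize (HB n); rewrite Cmod_mult, Cmod_pow, Cmod_R, Rabs_pos_eq in HB by (unfold rho; lra).
    exact HB. }
  replace r with (q * rho) by (unfold q; field; unfold rho; lra).
  replace ((INR n + 1) ^ 2 * (Cmod (c n) * (q * rho) ^ n))
    with ((INR n + 1) ^ 2 * q ^ n * (Cmod (c n) * rho ^ n)) by (rewrite Rpow_mult_distr; ring).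
  replace (K * B * t ^ n) with (K * t ^ n * B) by ring.
  apply Rmult_le_compat; [| apply Rmult_le_pos; [apply Cmod_ge_0 | apply pow_le; unfold rho; lra] | apply Hgeom | exact Hcn].
  apply Rmult_le_pos; [apply pow2_ge_0 | apply pow_le; lra].
Qed.

Lemma is_series_mul_C_derive_disk (z : C) :
  Cmod z < 1 -> is_series (fun n => INR n * c n * z ^ n)%C (z * C_derive f z)%C.
Proof.
  intros Hz.
  set (r := (1 + Cmod z) / 2).
  pose proof (Cmod_ge_0 z).
  destruct (coef_weight_le_geom r ltac:(unfold r; lra)) as [K [t [Ht Hc]]].
  apply (is_series_mul_C_derive c f r K t); [unfold r; lra | exact Ht | exact Hc | | unfold r; lra].
  intros y Hy; apply Hf; unfold r in Hy; lra.
Qed.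

End UnitDiskPowerSeries.

(** * Roots of unity and the discrete Parseval identity *)

Lemma Cmult_reg_l (a x y : C) : a <> 0%C -> (a * x = a * y)%C -> x = y.
Proof.
  intros Ha E.
  rewrite <- (Cmult_1_l x), <- (Cmult_1_l y), <- (Cinv_l a Ha), <- !Cmult_assoc, E; reflexivity.
Qed.

Definition cis (theta : R) : C := (cos theta, sin theta).

Lemma cis_pow (theta : R) (j : nat) : (cis theta ^ j)%C = cis (INR j * theta).
Proof.
  induction j as [|j IH].
  - unfold cis; simpl; rewrite Rmult_0_l, cos_0, sin_0; reflexivity.
  - rewrite Cpow_S, IH, S_INR; unfold cis, Cmult; simpl.
    replace ((INR j + 1) * theta) with (theta + INR j * theta) by ring.
    rewrite cos_plus, sin_plus; f_equal; ring.
Qed.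

Lemma Cmod_cis (theta : R) : Cmod (cis theta) = 1.
Proof.
  assert (E : cos theta ^ 2 + sin theta ^ 2 = 1)
    by (rewrite <- (sin2_cos2 theta); unfold Rsqr; ring).
  unfold Cmod, cis, fst, snd; rewrite E; apply sqrt_1.
Qed.

Definition root_of_unity (N : nat) : C := cis (2 * PI / INR N).

Section RootsOfUnity.

Variable P : nat.
Let w := root_of_unity (S P).

Lemma Cmod_root_of_unity : Cmod w = 1.
Proof. apply Cmod_cis. Qed.

Lemma root_of_unity_mul_conj : (w * Cconj w = 1)%C.
Proof. rewrite <- Cmod2_conj, Cmod_root_of_unity; simpl; f_equal; ring. Qed.

Lemma root_of_unity_pow_order : (w ^ S P = 1)%C.
Proof.
  unfold w, root_of_unity; rewrite cis_pow; unfold cis.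
  replace (INR (S P) * (2 * PI / INR (S P))) with (2 * PI) by (field; apply not_0_INR; lia).
  rewrite cos_2PI, sin_2PI; reflexivity.
Qed.

Lemma root_of_unity_pow_neq_1 (j : nat) : (0 < j <= P)%nat -> (w ^ j <> 1)%C.
Proof.
  intros Hj E; unfold w, root_of_unity in E; rewrite cis_pow in E.
  apply (f_equal fst) in E; change (cos (INR j * (2 * PI / INR (S P))) = 1) in E.
  set (theta := INR j * (2 * PI / INR (S P))) in E.
  assert (HN : 0 < INR (S P)) by (apply lt_0_INR; lia).
  assert (Hj0 : 0 < INR j) by (apply lt_0_INR; lia).
  assert (HjN : INR j < INR (S P)) by (apply lt_INR; lia).
  pose proof PI_RGT_0.
  assert (Htheta : 0 < theta < 2 * PI).
  { unfold theta; split; [apply Rmult_lt_0_compat; [lra | apply Rdiv_lt_0_compat; lra]|].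
    apply Rmult_lt_reg_r with (INR (S P)); [exact HN|].
    replace (INR j * (2 * PI / INR (S P)) * INR (S P)) with (INR j * (2 * PI)) by (field; lra).
    nra. }
  destruct (Rle_lt_dec theta PI).
  - pose proof (cos_decreasing_1 0 theta ltac:(lra) ltac:(lra) ltac:(lra) ltac:(lra) ltac:(lra)).
    rewrite cos_0 in *; lra.
  - pose proof (cos_increasing_1 theta (2 * PI) ltac:(lra) ltac:(lra) ltac:(lra) ltac:(lra) ltac:(lra)).
    rewrite cos_2PI in *; lra.
Qed.

Lemma root_of_unity_pow_inj (n m : nat) :
  (n <= P)%nat -> (m <= P)%nat -> (w ^ n = w ^ m)%C -> n = m.
Proof.
  assert (Hw : w <> 0%C) by (intros E; pose proof Cmod_root_of_unity; rewrite E, Cmod_0 in *; lra).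
  assert (Hlt : forall n m, (m < n <= P)%nat -> (w ^ n <> w ^ m)%C).
  { intros n' m' Hnm E.
    apply (root_of_unity_pow_neq_1 (n' - m')); [lia|].
    apply (Cmult_reg_l (w ^ m')); [apply Cpow_nz, Hw|].
    rewrite <- Cpow_add_r, Cmult_1_r; replace (m' + (n' - m'))%nat with n' by lia; exact E. }
  intros Hn Hm E; destruct (Nat.lt_total n m) as [H|[H|H]]; [| exact H |].
  - exfalso; apply (Hlt m n); [lia | symmetry; exact E].
  - exfalso; apply (Hlt n m); [lia | exact E].
Qed.

Lemma sum_n_root_of_unity_orthogonal (n m : nat) : (n <= P)%nat -> (m <= P)%nat ->
  sum_n (fun k => ((w ^ n * Cconj w ^ m) ^ k)%C) P
  = if Nat.eq_dec n m then RtoC (INR (S P)) else RtoC 0.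
Proof.
  intros Hn Hm.
  destruct (Nat.eq_dec n m) as [<-|Hnm].
  - rewrite <- Cpow_mult_l, root_of_unity_mul_conj, Cpow_1_l.
    rewrite (sum_n_ext _ (fun _ => RtoC 1)) by (intros; apply Cpow_1_l).
    rewrite sum_n_RtoC, sum_n_const, Rmult_1_r; reflexivity.
  - set (z := (w ^ n * Cconj w ^ m)%C).
    assert (Hz1 : z <> 1%C).
    { intros Hz; apply Hnm, root_of_unity_pow_inj; [exact Hn | exact Hm|].
      replace (w ^ n)%C with (z * w ^ m)%C by
        (unfold z; rewrite <- Cmult_assoc, <- Cpow_mult_l, (Cmult_comm _ w), root_of_unity_mul_conj, Cpow_1_l; ring).
      rewrite Hz; ring. }
    assert (HzN : (z ^ S P = 1)%C).
    { unfold z; rewrite Cpow_mult_l, <- !Cpow_mult_r, !(Nat.mul_comm _ (S P)), !Cpow_mult_r.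
      rewrite <- Cpow_conj, root_of_unity_pow_order, !Cpow_1_l.
      replace (Cconj 1) with (RtoC 1) by (apply injective_projections; simpl; ring).
      rewrite Cpow_1_l; ring. }
    pose proof (sum_n_Cgeom z P) as Hgeom; rewrite HzN in Hgeom.
    apply (Cmult_reg_l (1 - z)).
    + intros H; apply Hz1; replace z with (1 - (1 - z))%C by ring; rewrite H; ring.
    + rewrite Hgeom; ring.
Qed.

Lemma discrete_parseval (U : nat -> C) :
  sum_n (fun k => Cmod (sum_n (fun n => U n * (w ^ k) ^ n)%C P) ^ 2) P
  = INR (S P) * sum_n (fun n => Cmod (U n) ^ 2) P.
Proof.
  match goal with |- ?x = ?y => enough (H : RtoC x = RtoC y) by (apply (f_equal fst) in H; exact H) end.
  rewrite <- sum_n_RtoC, RtoC_mult, <- sum_n_RtoC, <- sum_n_Cmult_l.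
  transitivity (sum_n (fun k => sum_n (fun n => sum_n (fun m =>
    U n * Cconj (U m) * (w ^ n * Cconj w ^ m) ^ k) P) P) P)%C.
  { apply sum_n_ext; intros k.
    rewrite Cmod2_conj, sum_n_Cconj, <- sum_n_Cmult_r.
    apply sum_n_ext; intros n; rewrite <- sum_n_Cmult_l.
    apply sum_n_ext; intros m.
    rewrite Cmult_conj, !Cpow_conj, !Cpow_mult_l, <- !Cpow_mult_r, (Nat.mul_comm k n), (Nat.mul_comm k m).
    ring_C. }
  rewrite sum_n_switch; apply sum_n_ext_loc; intros n Hn.
  rewrite sum_n_switch.
  rewrite Cmod2_conj, <- (sum_n_kronecker (INR (S P) * (U n * Cconj (U n)))%C n P Hn).
  apply sum_n_ext_loc; intros m Hm.
  rewrite sum_n_Cmult_l, sum_n_root_of_unity_orthogonal by assumption.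
  destruct Nat.eq_dec as [<-|]; ring_C.
Qed.

Lemma discrete_parseval_le (U V : nat -> C) (M e A : R) :
  0 <= M -> 0 <= e ->
  (forall k, (k <= P)%nat ->
     Cmod (sum_n (fun n => U n * (w ^ k) ^ n)%C P)
     <= M * Cmod (sum_n (fun n => V n * (w ^ k) ^ n)%C P) + e) ->
  (forall k, (k <= P)%nat -> Cmod (sum_n (fun n => V n * (w ^ k) ^ n)%C P) <= A) ->
  sum_n (fun n => Cmod (U n) ^ 2 - M ^ 2 * Cmod (V n) ^ 2) P <= 2 * M * e * A + e ^ 2.
Proof.
  intros HM He HUV HV.
  set (GU k := Cmod (sum_n (fun n => U n * (w ^ k) ^ n)%C P)).
  set (GV k := Cmod (sum_n (fun n => V n * (w ^ k) ^ n)%C P)).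
  assert (Hk : sum_n (fun k => GU k ^ 2) P
               <= sum_n (fun k => M ^ 2 * GV k ^ 2 + (2 * M * e * A + e ^ 2)) P).
  { apply sum_n_le_loc; intros k Hk'.
    specialize (HUV k Hk'); specialize (HV k Hk'); fold (GU k) (GV k) in HUV, HV.
    assert (0 <= GU k) by apply Cmod_ge_0; assert (0 <= GV k) by apply Cmod_ge_0.
    assert (GU k ^ 2 <= (M * GV k + e) ^ 2) by (apply pow_incr; lra).
    assert (M * e * GV k <= M * e * A) by (apply Rmult_le_compat_l; [nra | exact HV]).
    nra. }
  unfold GU, GV in Hk.
  rewrite discrete_parseval, sum_n_Rplus, sum_n_Rmult_l, discrete_parseval, sum_n_const in Hk.
  rewrite (sum_n_ext _ (fun n => Cmod (U n) ^ 2 + (- M ^ 2) * Cmod (V n) ^ 2)) by (intros; ring_R).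
  rewrite sum_n_Rplus, sum_n_Rmult_l.
  assert (HN : 0 < INR (S P)) by (apply lt_0_INR; lia).
  apply Rmult_le_reg_l with (INR (S P)); [exact HN | nra].
Qed.

End RootsOfUnity.

(** * Coefficient inequality for |z f'(z)| <= M |f(z)| *)

Section AreaInequality.

Variables (c : nat -> C) (f : C -> C) (M : R).
Hypothesis HM : 0 <= M.
Hypothesis Hf : forall z, Cmod z < 1 -> is_series (fun n => c n * z ^ n)%C (f z).
Hypothesis Hzf : forall z, Cmod z < 1 -> z <> 0%C -> Cmod (z * C_derive f z) <= M * Cmod (f z).

Lemma Cmod_partial_sum_mul_deriv_le (zeta : C) (K t : R) (P : nat) :
  0 < Cmod zeta < 1 -> 0 <= t < 1 ->
  (forall n, (INR n + 1) ^ 2 * (Cmod (c n) * Cmod zeta ^ n) <= K * t ^ n) ->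
  Cmod (sum_n (fun n => INR n * c n * zeta ^ n)%C P)
  <= M * Cmod (sum_n (fun n => c n * zeta ^ n)%C P) + (M + 1) * (K * t ^ S P / (1 - t)).
Proof.
  intros Hzeta Ht Hc.
  assert (Hterm : forall n, Cmod (c n) * Cmod zeta ^ n <= K * t ^ n
                  /\ INR n * (Cmod (c n) * Cmod zeta ^ n) <= K * t ^ n)
    by (intros n; apply le_of_sq_succ_mul_le, Hc;
        apply Rmult_le_pos; [apply Cmod_ge_0 | apply pow_le, Cmod_ge_0]).
  set (GU := sum_n (fun n => INR n * c n * zeta ^ n)%C P).
  set (GV := sum_n (fun n => c n * zeta ^ n)%C P).
  set (tail := K * t ^ S P / (1 - t)).
  assert (HU : Cmod (zeta * C_derive f zeta - GU)%C <= tail).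
  { apply (Cmod_series_tail_le_geom _ K t Ht); [|apply is_series_mul_C_derive_disk; [exact Hf | lra]].
    intros n; rewrite !Cmod_mult, Cmod_pow, Cmod_R, Rabs_pos_eq by apply pos_INR.
    rewrite Rmult_assoc; apply Hterm. }
  assert (HV : Cmod (f zeta - GV)%C <= tail).
  { apply (Cmod_series_tail_le_geom _ K t Ht); [|apply Hf; lra].
    intros n; rewrite Cmod_mult, Cmod_pow; apply Hterm. }
  assert (Hmain : Cmod (zeta * C_derive f zeta) <= M * Cmod (f zeta)).
  { apply Hzf; [lra|]; intros E; rewrite E, Cmod_0 in Hzeta; lra. }
  assert (HGU : Cmod GU <= Cmod (zeta * C_derive f zeta) + tail).
  { replace GU with (zeta * C_derive f zeta - (zeta * C_derive f zeta - GU))%C by ring.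
    eapply Rle_trans; [apply Cmod_triangle|]; rewrite Cmod_opp; lra. }
  assert (Hf_le : Cmod (f zeta) <= Cmod GV + tail).
  { replace (f zeta) with (GV + (f zeta - GV))%C by ring.
    eapply Rle_trans; [apply Cmod_triangle | lra]. }
  apply Rmult_le_compat_l with (r := M) in Hf_le; [lra | exact HM].
Qed.

Lemma truncated_area_le (r K t : R) (P : nat) : 0 < r < 1 -> 0 <= t < 1 ->
  (forall n, (INR n + 1) ^ 2 * (Cmod (c n) * r ^ n) <= K * t ^ n) ->
  sum_n (fun n => (INR n ^ 2 - M ^ 2) * (Cmod (c n) * r ^ n) ^ 2) P
  <= 2 * M * ((M + 1) * (K * t ^ S P / (1 - t))) * (K / (1 - t))
     + ((M + 1) * (K * t ^ S P / (1 - t))) ^ 2.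
Proof.
  intros Hr Ht Hc.
  assert (HK : 0 <= K) by (pose proof (Hc 0%nat); pose proof (Cmod_ge_0 (c 0%nat)); simpl in *; nra).
  set (w := root_of_unity (S P)).
  set (U n := (INR n * c n * RtoC r ^ n)%C); set (V n := (c n * RtoC r ^ n)%C).
  assert (Hzeta : forall k, Cmod (r * w ^ k)%C = r).
  { intros k; unfold w; rewrite Cmod_mult, Cmod_pow, Cmod_R, Cmod_root_of_unity, pow1, Rabs_pos_eq; lra. }
  assert (Hcoef : forall k n, (INR n + 1) ^ 2 * (Cmod (c n) * Cmod (r * w ^ k)%C ^ n) <= K * t ^ n)
    by (intros k n; rewrite Hzeta; apply Hc).
  assert (HU : forall k, sum_n (fun n => U n * (w ^ k) ^ n)%C P
                         = sum_n (fun n => INR n * c n * (r * w ^ k) ^ n)%C P).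
  { intros k; apply sum_n_ext; intros n; unfold U; rewrite Cpow_mult_l; ring_C. }
  assert (HV : forall k, sum_n (fun n => V n * (w ^ k) ^ n)%C P
                         = sum_n (fun n => c n * (r * w ^ k) ^ n)%C P).
  { intros k; apply sum_n_ext; intros n; unfold V; rewrite Cpow_mult_l; ring_C. }
  eapply Rle_trans; [|apply (discrete_parseval_le P U V); [exact HM | | |]].
  - right; apply sum_n_ext; intros n; unfold U, V.
    rewrite !Cmod_mult, !Cmod_pow, Cmod_R, Rabs_pos_eq by apply pos_INR.
    rewrite Cmod_R, Rabs_pos_eq by lra; ring_R.
  - pose proof (pow_le t (S P) (proj1 Ht)).
    apply Rmult_le_pos; [lra|]; apply Rmult_le_pos; [nra | left; apply Rinv_0_lt_compat; lra].
  - intros k _; rewrite HU, HV.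
    apply Cmod_partial_sum_mul_deriv_le; [rewrite Hzeta; lra | exact Ht | apply Hcoef].
  - intros k _; rewrite HV.
    apply (Cmod_sum_n_le_geom _ K t Ht); intros n; rewrite Cmod_mult, Cmod_pow.
    apply (le_of_sq_succ_mul_le n); [|apply Hcoef].
    apply Rmult_le_pos; [apply Cmod_ge_0 | apply pow_le, Cmod_ge_0].
Qed.

Lemma truncated_area_le_geom (r : R) : 0 < r < 1 ->
  exists K0 t, 0 <= t < 1 /\ forall P,
    sum_n (fun n => (INR n ^ 2 - M ^ 2) * (Cmod (c n) * r ^ n) ^ 2) P <= K0 * t ^ S P.
Proof.
  intros Hr.
  destruct (coef_weight_le_geom c f Hf r) as [K [t [Ht Hc]]]; [lra|].
  assert (HK : 0 <= K) by (pose proof (Hc 0%nat); pose proof (Cmod_ge_0 (c 0%nat)); simpl in *; nra).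
  set (A := K / (1 - t)); set (E := (M + 1) * A).
  assert (HA : 0 <= A) by (apply Rmult_le_pos; [|left; apply Rinv_0_lt_compat]; lra).
  assert (HE : 0 <= E) by (apply Rmult_le_pos; lra).
  exists (2 * M * E * A + E ^ 2), t; split; [exact Ht|]; intros P.
  eapply Rle_trans; [apply (truncated_area_le r K t P Hr Ht Hc)|].
  set (s := t ^ S P).
  assert (Hs : 0 <= s <= 1) by (split; [apply pow_le | apply pow_le_1]; lra).
  replace ((M + 1) * (K * s / (1 - t))) with (E * s) by (unfold E, A; field; lra).
  assert (0 <= M * E * A) by (apply Rmult_le_pos; [apply Rmult_le_pos|]; assumption).
  assert (E ^ 2 * s ^ 2 <= E ^ 2 * s) by (apply Rmult_le_compat_l; [apply pow2_ge_0 | simpl; nra]).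
  fold A; nra.
Qed.

Lemma area_partial_sum_radius_le_0 (r : R) (P : nat) : 0 < r < 1 -> M <= INR (S P) ->
  sum_n (fun n => (INR n ^ 2 - M ^ 2) * (Cmod (c n) * r ^ n) ^ 2) P <= 0.
Proof.
  intros Hr HMP.
  destruct (truncated_area_le_geom r Hr) as [K0 [t [Ht Hbound]]].
  apply (le_0_of_le_geom _ K0 t (S P) Ht); intros [|Q] HQ; [lia|].
  eapply Rle_trans; [|apply Hbound].
  apply sum_n_le_mono; [|lia].
  intros n Hn; apply Rmult_le_pos; [|apply pow2_ge_0].
  assert (INR (S P) <= INR n) by (apply le_INR; lia).
  simpl; nra.
Qed.

Lemma area_partial_sum_le_0 (P : nat) : M <= INR (S P) ->
  sum_n (fun n => (INR n ^ 2 - M ^ 2) * Cmod (c n) ^ 2) P <= 0.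
Proof.
  intros HMP; apply le_0_of_radial_le_0; intros r Hr.
  eapply Rle_trans; [|apply (area_partial_sum_radius_le_0 r P Hr HMP)].
  right; apply sum_n_ext; intros n; rewrite Nat.mul_comm, pow_mult; ring_R.
Qed.

End AreaInequality.

(** * The class S*_nc *)

Lemma cos_1_ge_half : 1 / 2 <= cos 1.
Proof.
  assert (Hpi := PI2_1).
  destruct (COS 1 ltac:(lra) ltac:(lra)) as [Hlb _].
  replace (cos_lb 1) with (389 / 720) in Hlb by (unfold cos_lb, cos_approx, cos_term; simpl; field).
  lra.
Qed.

Lemma cosh_ge_1 (y : R) : 1 <= cosh y.
Proof.
  unfold cosh; rewrite exp_Ropp.
  pose proof (exp_pos y) as He; set (e := exp y) in *.
  assert (e + / e - 2 = (e - 1) ^ 2 / e) by (field; lra).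
  assert (0 <= (e - 1) ^ 2 / e) by (apply Rmult_le_pos; [apply pow2_ge_0 | left; apply Rinv_0_lt_compat; lra]).
  lra.
Qed.

Lemma Cmod_Ccos_ge (u : C) : Cmod u < 1 -> cos 1 <= Cmod (Ccos u).
Proof.
  intros Hu.
  assert (Hpi := PI2_1).
  assert (Hre : Rabs (Re u) < 1) by (eapply Rle_lt_trans; [apply re_le_Cmod | exact Hu]).
  assert (Hcos : cos 1 <= cos (Re u)).
  { replace (cos (Re u)) with (cos (Rabs (Re u)))
      by (unfold Rabs; destruct Rcase_abs; [apply cos_neg | reflexivity]).
    apply cos_decr_1; pose proof (Rabs_pos (Re u)); lra. }
  pose proof cos_1_ge_half; pose proof (cosh_ge_1 (Im u)).
  eapply Rle_trans; [|apply re_le_Cmod].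
  unfold Ccos; simpl; rewrite Rabs_pos_eq by nra; nra.
Qed.

Lemma Cmod_nc_fun_le (u : C) : Cmod u < 1 -> Cmod (nc_fun u) <= 2 / cos 1.
Proof.
  intros Hu; unfold nc_fun.
  pose proof (Cmod_Ccos_ge u Hu); pose proof cos_1_ge_half.
  assert (Hnz : Ccos u <> 0%C) by (intros E; rewrite E, Cmod_0 in *; lra).
  assert (Cmod (1 + u) <= 2) by (eapply Rle_trans; [apply Cmod_triangle | rewrite Cmod_1; lra]).
  rewrite Cmod_div by exact Hnz.
  unfold Rdiv; apply Rmult_le_compat; [apply Cmod_ge_0 | left; apply Rinv_0_lt_compat; lra | assumption |].
  apply Rinv_le_contravar; lra.
Qed.

Lemma S_star_nc_mul_derive_le (f : C -> C) : S_star_nc f ->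
  forall z, Cmod z < 1 -> z <> 0%C -> Cmod (z * C_derive f z) <= 2 / cos 1 * Cmod (f z).
Proof.
  intros [_ [Hnz [_ [_ [w [_ [_ [Hw Hsub]]]]]]]] z Hz Hz0.
  specialize (Hsub z Hz); unfold starQ in Hsub.
  destruct (Req_EM_T (Cmod z) 0) as [E|_]; [apply Cmod_eq_0 in E; contradiction|].
  pose proof (Hnz z Hz Hz0) as Hfz; apply Cmod_gt_0 in Hfz.
  pose proof (Cmod_nc_fun_le (w z) (Hw z Hz)) as Hle.
  rewrite <- Hsub, Cmod_div in Hle by (apply Hnz; assumption).
  apply Rmult_le_compat_r with (r := Cmod (f z)) in Hle; [|lra].
  unfold Rdiv in Hle; rewrite Rmult_assoc, Rinv_l, Rmult_1_r in Hle by lra; exact Hle.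
Qed.

Definition classA_coef (a : nat -> C) (n : nat) : C :=
  match n with 0 => 0%C | 1 => 1%C | _ => a n end.

Lemma is_series_classA_coef (f : C -> C) (a : nat -> C) :
  (forall z, inD z -> is_series (fun n => (a (n + 2)%nat * z ^ (n + 2))%C) (f z - z)%C) ->
  forall z, Cmod z < 1 -> is_series (fun n => (classA_coef a n * z ^ n)%C) (f z).
Proof.
  intros Ha z Hz.
  apply (is_series_decr_n _ 2); [lia|].
  match goal with |- is_series _ ?l => replace l with (f z - z)%C end.
  - eapply is_series_ext; [|exact (Ha z Hz)].
    intros n; cbv beta; rewrite (Nat.add_comm n 2); reflexivity.
  - simpl; rewrite sum_Sn, sum_O; simpl; ring_C.
Qed.

Lemma two_div_cos_1_le_4 : 0 <= 2 / cos 1 <= 4.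
Proof.
  pose proof cos_1_ge_half; split; [apply Rlt_le, Rdiv_lt_0_compat; lra|].
  apply Rmult_le_reg_r with (cos 1); [lra|].
  unfold Rdiv; rewrite Rmult_assoc, Rinv_l; lra.
Qed.

Lemma S_star_nc_partial_sum_le_0 (f : C -> C) (a : nat -> C) (P : nat) :
  S_star_nc f ->
  (forall z, inD z -> is_series (fun n => (a (n + 2)%nat * z ^ (n + 2))%C) (f z - z)%C) ->
  (3 <= P)%nat ->
  sum_n (fun n => (INR n ^ 2 * cos 1 ^ 2 - 4) * Cmod (classA_coef a n) ^ 2) P <= 0.
Proof.
  intros Hf Ha HP.
  pose proof cos_1_ge_half; pose proof two_div_cos_1_le_4.
  rewrite (sum_n_ext _
    (fun n => cos 1 ^ 2 * ((INR n ^ 2 - (2 / cos 1) ^ 2) * Cmod (classA_coef a n) ^ 2)))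
    by (intros n; eq_R; field; lra).
  rewrite sum_n_Rmult_l.
  assert (Harea : sum_n (fun n => (INR n ^ 2 - (2 / cos 1) ^ 2) * Cmod (classA_coef a n) ^ 2) P <= 0).
  { apply (area_partial_sum_le_0 _ f); [lra | apply is_series_classA_coef, Ha
      | apply S_star_nc_mul_derive_le, Hf |].
    pose proof (le_INR 4 (S P) ltac:(lia)); replace (INR 4) with 4 in * by (simpl; ring); lra. }
  pose proof (pow2_ge_0 (cos 1)); nra.
Qed.

Theorem mainTheorem3 (f : C -> C) (a : nat -> C) :
  S_star_nc f ->
  (forall z : C, inD z ->
     is_series (fun n : nat => (a (n + 2)%nat * z ^ (n + 2))%C) (f z - z)%C) ->
  exists s : R,
    is_series (fun n : nat =>
      (INR (n + 2) ^ 2 * (cos 1) ^ 2 - 4) * (Cmod (a (n + 2)%nat)) ^ 2) s /\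
    s <= 4 - (cos 1) ^ 2.
Proof.
  intros Hf Ha.
  pose proof cos_1_ge_half.
  apply (is_series_of_eventually_nonneg_bounded _ 2).
  - intros n Hn; apply Rmult_le_pos; [|apply pow2_ge_0].
    assert (4 <= INR (n + 2)) by (replace 4 with (INR 4) by (simpl; ring); apply le_INR; lia).
    replace (INR (n + 2) ^ 2 * cos 1 ^ 2) with ((INR (n + 2) * cos 1) ^ 2) by ring.
    assert (2 <= INR (n + 2) * cos 1) by nra; nra.
  - intros N HN.
    pose proof (S_star_nc_partial_sum_le_0 f a (N + 2) Hf Ha ltac:(lia)) as Hsum.
    set (x m := (INR m ^ 2 * cos 1 ^ 2 - 4) * Cmod (classA_coef a m) ^ 2) in Hsum.
    rewrite (sum_n_ext _ (fun n => x (n + 2)%nat))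
      by (intros n; unfold x; rewrite (Nat.add_comm n 2); reflexivity).
    rewrite sum_n_shift_2; unfold x in *; simpl classA_coef; rewrite Cmod_0, Cmod_1.
    change (INR 0) with 0; change (INR 1) with 1; lra.
Qed.
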